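(* Let $G$ be a finitely generated group, $H$ a finitely generated subgroup, $A$ a finite alphabet, $S\subseteq H$ finite and $\mu:A^S\to A$. Let $\Phi_H:A^H\to A^H$ and $\Phi_G:A^G\to A^G$ be the cellular automata defined by $\Phi_H(x)(h)=\mu(s\mapsto x(hs))$ and $\Phi_G(x)(g)=\mu(s\mapsto x(gs))$. If $\Phi_G$ has an equicontinuity point, then so does $\Phi_H$.
   Context: Metrics: fix a finite generating set $E_H$ of $H$ closed under inverses and a finite generating set $D\supseteq E_H$ of $G$ closed under inverses, with word metrics $d_H$, $d_G$. The Cantor metric on $A^H$ is $d^H(x,y)=2^{-k}$ with $k=\min\{d_H(1,h):x(h)\neq y(h)\}$, and on $A^G$ similarly $d^G$ using $d_G$; $B^H$, $B^G$ denote closed balls. A configuration $x$ is an equicontinuity point of a map $\Phi$ on such a space with balls $B$ if $\forall\epsilon>0\,\exists\delta>0\,\forall t\in\mathbb{N}$, $\Phi^t(B(x,\delta))\subseteq B(\Phi^t(x),\epsilon)$. (This notion does not depend on the choice of generating sets.) *)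

From Stdlib Require Import Reals List.
Import ListNotations.
Open Scope R_scope.
Set Implicit Arguments.

Record IsGroup (G : Type) (mul : G -> G -> G) (one : G) (inv : G -> G) : Prop := {
  grp_assoc : forall a b c, mul a (mul b c) = mul (mul a b) c;
  grp_one_l : forall a, mul one a = a;
  grp_one_r : forall a, mul a one = a;
  grp_inv_l : forall a, mul (inv a) a = one;
  grp_inv_r : forall a, mul a (inv a) = one }.

Record IsSubgroup (G : Type) (mul : G -> G -> G) (one : G) (inv : G -> G)
    (H : G -> Prop) : Prop := {
  sub_one : H one;
  sub_mul : forall a b, H a -> H b -> H (mul a b);
  sub_inv : forall a, H a -> H (inv a) }.

Definition is_word (G : Type) (mul : G -> G -> G) (one : G) (E : list G)
    (g : G) (n : nat) : Prop :=
  exists l : list G, length l = n /\ (forall e, In e l -> In e E) /\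
                     fold_right mul one l = g.

Definition word_len (G : Type) (mul : G -> G -> G) (one : G) (E : list G)
    (g : G) (k : nat) : Prop :=
  is_word mul one E g k /\ forall n, is_word mul one E g n -> (k <= n)%nat.

Definition gen_set (G : Type) (mul : G -> G -> G) (one : G) (inv : G -> G)
    (H : G -> Prop) (E : list G) : Prop :=
  (forall e, In e E -> H e) /\ (forall e, In e E -> In (inv e) E) /\
  (forall h, H h -> exists n, is_word mul one E h n).

(* Cantor metric on A^X, X a domain with length function wl (wl x k means
   d(1,x) = k):  d(x,y) = 2^{-k}, k = min { d(1,h) : x h <> y h } (and 0 if
   x = y).  [cantor_le wl x y delta] means d(x,y) <= delta, i.e. y is in the
   closed ball B(x,delta); unfolded: every disagreement h has 2^{-d(1,h)} <= delta. *)
Definition cantor_le (X A : Type) (wl : X -> nat -> Prop) (x y : X -> A)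
    (delta : R) : Prop :=
  0 <= delta /\ forall h k, x h <> y h -> wl h k -> (/2) ^ k <= delta.

Definition equicontinuity_point (X A : Type) (wl : X -> nat -> Prop)
    (Phi : (X -> A) -> (X -> A)) (x : X -> A) : Prop :=
  forall eps, 0 < eps -> exists delta, 0 < delta /\
    forall (t : nat) (y : X -> A), cantor_le wl x y delta ->
      cantor_le wl (Nat.iter t Phi x) (Nat.iter t Phi y) eps.

Definition has_equicontinuity_point (X A : Type) (wl : X -> nat -> Prop)
    (Phi : (X -> A) -> (X -> A)) : Prop :=
  exists x, equicontinuity_point wl Phi x.


Definition PhiG (G A : Type) (mul : G -> G -> G) (S : list G)
    (mu : ({ s : G | In s S } -> A) -> A) (x : G -> A) : G -> A :=
  fun g => mu (fun s => x (mul g (proj1_sig s))).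

Definition PhiH (G A : Type) (mul : G -> G -> G) (H : G -> Prop)
    (hmul : forall a b, H a -> H b -> H (mul a b))
    (S : list G) (hS : forall s, In s S -> H s)
    (mu : ({ s : G | In s S } -> A) -> A) (x : { h : G | H h } -> A)
    : { h : G | H h } -> A :=
  fun h => mu (fun s => x (exist H (mul (proj1_sig h) (proj1_sig s))
                   (hmul _ _ (proj2_sig h) (hS _ (proj2_sig s))))).

(** Restriction to [H] commutes with the automata: [Φ_H (x|_H) = (Φ_G x)|_H].
    Let [x] be an equicontinuity point of [Φ_G]; we show that [x|_H] is one of
    [Φ_H].  Given [ε], take the [δ] of [x] and a radius [N] with
    [2^{-k} <= δ] for [k > N].  The [D]-ball of radius [N] is finite, so its
    elements lying in [H] have [E_H]-length at most some [M].  If [y] agrees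
    with [x|_H] on the [E_H]-ball of radius [M], its extension by [x] outside
    [H] is [δ]-close to [x]; hence the orbits stay [ε]-close in [A^G], and
    since [E_H ⊆ D] makes [E_H]-lengths dominate [D]-lengths, also in [A^H]. *)

From Stdlib Require Import Reals List Lia Lra Wf_nat.
From Stdlib Require Import Classical ClassicalEpsilon FunctionalExtensionality ProofIrrelevance.
Import ListNotations.
Open Scope R_scope.

Lemma half_pow_pos (n : nat) : 0 < (/2) ^ n.
Proof. apply pow_lt; lra. Qed.

Lemma half_pow_antitone {m n : nat} : (m <= n)%nat -> (/2) ^ n <= (/2) ^ m.
Proof.
  intro Hmn; rewrite !pow_inv.
  apply Rinv_le_contravar; [apply pow_lt; lra | apply Rle_pow; [lra | exact Hmn]].
Qed.

Lemma half_pow_eventually_le {delta : R} :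
  0 < delta -> exists N, forall k, (N < k)%nat -> (/2) ^ k <= delta.
Proof.
  intro Hdelta.
  destruct (pow_lt_1_zero (/2) ltac:(rewrite Rabs_pos_eq; lra) delta Hdelta) as [N HN].
  exists N; intros k Hk.
  specialize (HN k ltac:(lia)); rewrite Rabs_pos_eq in HN by apply Rlt_le, half_pow_pos.
  lra.
Qed.

Lemma bound_on_list {X : Type} (L : list X) (R : X -> nat -> Prop) :
  (forall x, In x L -> exists n, R x n) ->
  exists M, forall x, In x L -> exists n, R x n /\ (n <= M)%nat.
Proof.
  induction L as [|x0 L IH]; intro HR; [exists O; intros x []|].
  destruct (HR x0 (in_eq x0 L)) as [n0 Hn0].
  destruct IH as [M HM]; [intros x Hx; apply HR, in_cons, Hx|].
  exists (Nat.max n0 M); intros x [<-|Hx].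
  - exists n0; split; [exact Hn0 | lia].
  - destruct (HM x Hx) as [n [Hn HnM]]; exists n; split; [exact Hn | lia].
Qed.

Fixpoint words_upto {G : Type} (E : list G) (n : nat) : list (list G) :=
  match n with
  | O => [[]]
  | S n => [] :: flat_map (fun e => map (cons e) (words_upto E n)) E
  end.

Lemma in_words_upto {G : Type} (E : list G) (n : nat) (l : list G) :
  (length l <= n)%nat -> (forall e, In e l -> In e E) -> In l (words_upto E n).
Proof.
  revert l; induction n as [|n IH]; intros [|e l] Hl HE; simpl in *; auto; [lia|].
  right; apply in_flat_map; exists e; split; [apply HE; auto|].
  apply in_map, IH; [lia | auto].
Qed.

Section WordLength.

Context {G : Type} (mul : G -> G -> G) (one : G).

Lemma is_word_incl {E E' : list G} {g : G} {n : nat} :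
  (forall e, In e E -> In e E') -> is_word mul one E g n -> is_word mul one E' g n.
Proof. intros HE [l [Hl [Hin Hg]]]; exists l; auto. Qed.

Lemma word_len_le_of_is_word {E : list G} {g : G} {n : nat} :
  is_word mul one E g n -> exists k, word_len mul one E g k /\ (k <= n)%nat.
Proof.
  intro Hw.
  destruct (dec_inh_nat_subset_has_unique_least_element (is_word mul one E g))
    as [k [[Hk Hmin] _]]; [intro m; apply classic | exists n; exact Hw |].
  exists k; split; [split; assumption | exact (Hmin n Hw)].
Qed.

Lemma word_len_incl {E E' : list G} {g : G} {k : nat} :
  (forall e, In e E -> In e E') -> word_len mul one E g k ->
  exists k', word_len mul one E' g k' /\ (k' <= k)%nat.
Proof. intros HE [Hk _]; exact (word_len_le_of_is_word (is_word_incl HE Hk)). Qed.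

Lemma word_len_bounded_on_ball (H : G -> Prop) (E D : list G) (N : nat) :
  (forall h, H h -> exists n, is_word mul one E h n) ->
  exists M, forall g k, H g -> is_word mul one D g k -> (k <= N)%nat ->
    exists m, word_len mul one E g m /\ (m <= M)%nat.
Proof.
  intro HgenH.
  destruct (bound_on_list (words_upto D N)
              (fun l m => H (fold_right mul one l) ->
                          word_len mul one E (fold_right mul one l) m)) as [M HM].
  { intros l _; destruct (classic (H (fold_right mul one l))) as [Hl|Hl].
    - destruct (HgenH _ Hl) as [n Hn]; destruct (word_len_le_of_is_word Hn) as [m [Hm _]].
      exists m; intros _; exact Hm.
    - exists O; intro; contradiction. }
  exists M; intros g k Hg [l [Hl [HlD <-]]] HkN.
  destruct (HM l (in_words_upto D N l ltac:(lia) HlD)) as [m [Hm HmM]].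
  exists m; split; [exact (Hm Hg) | exact HmM].
Qed.

End WordLength.

Section Restriction.

Context {G A : Type} (H : G -> Prop).

Definition restrict (x : G -> A) : {h : G | H h} -> A := fun h => x (proj1_sig h).

Definition extend (x : G -> A) (y : {h : G | H h} -> A) : G -> A :=
  fun g => match excluded_middle_informative (H g) with
           | left p => y (exist H g p)
           | right _ => x g
           end.

Lemma restrict_extend (x : G -> A) (y : {h : G | H h} -> A) : restrict (extend x y) = y.
Proof.
  apply functional_extensionality; intros [g p]; unfold restrict, extend; simpl.
  destruct (excluded_middle_informative (H g)) as [q|]; [|contradiction].
  now rewrite (proof_irrelevance _ p q).
Qed.

Lemma extend_neq (x : G -> A) (y : {h : G | H h} -> A) (g : G) :
  extend x y g <> x g -> exists p : H g, y (exist H g p) <> x g.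
Proof.
  unfold extend; destruct (excluded_middle_informative (H g)) as [p|]; [|contradiction].
  intro Hne; exists p; exact Hne.
Qed.

Lemma cantor_le_restrict (wlG : G -> nat -> Prop) (wlH : {h : G | H h} -> nat -> Prop)
    (x z : G -> A) (eps : R) :
  (forall h k, wlH h k -> exists k', wlG (proj1_sig h) k' /\ (k' <= k)%nat) ->
  cantor_le wlG x z eps -> cantor_le wlH (restrict x) (restrict z) eps.
Proof.
  intros Hdom [Heps Hxz]; split; [exact Heps|].
  intros h k Hne Hk; destruct (Hdom h k Hk) as [k' [Hk' Hk'k]].
  pose proof (Hxz _ k' Hne Hk'); pose proof (half_pow_antitone Hk'k); lra.
Qed.

Lemma cantor_le_extend (wlG : G -> nat -> Prop) (wlH : {h : G | H h} -> nat -> Prop)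
    (x : G -> A) (y : {h : G | H h} -> A) (delta : R) (N M : nat) :
  0 < delta ->
  (forall k, (N < k)%nat -> (/2) ^ k <= delta) ->
  (forall g (p : H g) k, wlG g k -> (k <= N)%nat ->
     exists m, wlH (exist H g p) m /\ (m <= M)%nat) ->
  cantor_le wlH (restrict x) y ((/2) ^ S M) ->
  cantor_le wlG x (extend x y) delta.
Proof.
  intros Hdelta HN HM [_ Hy]; split; [lra|].
  intros g k Hne Hk; destruct (extend_neq x y g (not_eq_sym Hne)) as [p Hp].
  destruct (Nat.le_gt_cases k N) as [HkN|HkN]; [exfalso | exact (HN k HkN)].
  destruct (HM g p k Hk HkN) as [m [Hm HmM]].
  pose proof (Hy (exist H g p) m (not_eq_sym Hp) Hm); pose proof (half_pow_antitone HmM).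
  simpl in *; pose proof (half_pow_pos M); lra.
Qed.

End Restriction.

Lemma iter_PhiH_restrict (G A : Type) (mul : G -> G -> G) (H : G -> Prop)
    (hmul : forall a b, H a -> H b -> H (mul a b)) (S : list G)
    (hS : forall s, In s S -> H s) (mu : ({s : G | In s S} -> A) -> A)
    (t : nat) (x : G -> A) :
  Nat.iter t (@PhiH G A mul H hmul S hS mu) (restrict H x)
  = restrict H (Nat.iter t (@PhiG G A mul S mu) x).
Proof. induction t as [|t IH]; simpl; [reflexivity | now rewrite IH]. Qed.

Theorem proposition5
  (G : Type) (mul : G -> G -> G) (one : G) (inv : G -> G)
  (hG : IsGroup mul one inv)
  (H : G -> Prop) (hH : IsSubgroup mul one inv H)
  (EH D : list G)
  (hEH : gen_set mul one inv H EH)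
  (hD : gen_set mul one inv (fun _ => True) D)
  (hEHD : forall e, In e EH -> In e D)
  (A : Type) (hA : exists l : list A, forall a, In a l)
  (S : list G) (hS : forall s, In s S -> H s)
  (mu : ({ s : G | In s S } -> A) -> A) :
  has_equicontinuity_point (word_len mul one D) (@PhiG G A mul S mu) ->
  has_equicontinuity_point
    (fun h : { h : G | H h } => word_len mul one EH (proj1_sig h))
    (@PhiH G A mul H (sub_mul hH) S hS mu).
Proof.
  intros [x Hx]; exists (restrict H x); intros eps Heps.
  destruct (Hx eps Heps) as [delta [Hdelta Hd]].
  destruct (half_pow_eventually_le Hdelta) as [N HN].
  destruct hEH as [_ [_ HgenH]].
  destruct (word_len_bounded_on_ball mul one H EH D N HgenH) as [M HM].
  exists ((/2) ^ Datatypes.S M); split; [apply half_pow_pos|].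
  intros t y Hy.
  rewrite <- (restrict_extend H x y), !iter_PhiH_restrict.
  apply (cantor_le_restrict H (word_len mul one D)).
  - intros h k Hk; exact (word_len_incl mul one hEHD Hk).
  - apply Hd; eapply cantor_le_extend; [exact Hdelta | exact HN | | exact Hy].
    intros g p k [Hk _] HkN; exact (HM g k p Hk HkN).
Qed.
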